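(* Consider the following iteration (Kaczmarz method with line-search), started at $x_0\in\mathbb{R}^n$: for $k=0,1,2,\ldots$, set $d=P(x_k)-x_k$ and $\delta=\|d\|^2$; if $\delta=0$, terminate and return $x_k$; otherwise set $\rho=\|r(x_k)\|^2$, $s=\frac12+\frac{\rho}{2\delta}$ and $x_{k+1}=x_k+sd$. Then either the iteration terminates after finitely many steps and returns some $x_k$ with $Ax_k=b$, or it generates a well-defined infinite sequence $(x_k)_k$ such that for all $k$ and all $x^*\in\mathbb{R}^n$ with $Ax^*=b$: \[x_{k+1}=\operatorname{argmin}_{\xi\in\operatorname{aff}(x_k,P(x_k))}\|\xi-x^*\|^2,\qquad \|x_k-x^*\|^2-\|x_{k+1}-x^*\|^2=\frac{(\|r(x_k)\|^2+\|P(x_k)-x_k\|^2)^2}{4\|P(x_k)-x_k\|^2},\] and in particular $\|x_{k+1}-x^*\|^2\le\|P(x_k)-x^*\|^2$.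
   Context: Let $A=(a_1,\ldots,a_m)^T\in\mathbb{R}^{m\times n}$ with rows $a_j\in\mathbb{R}^n\setminus\{0\}$, and let $b\in\mathbb{R}^m$ lie in the range of $A$. Norms are Euclidean. For $j=1,\ldots,m$ define the projectors $P_j:\mathbb{R}^n\to\mathbb{R}^n$, $P_j(x)=\big(I-\frac{a_ja_j^T}{\|a_j\|^2}\big)x+\frac{b_j}{\|a_j\|^2}a_j$ (the orthogonal projection onto $\{z:a_j^Tz=b_j\}$), and the Kaczmarz cycle $P=P_m\circ\cdots\circ P_1$. The residual $r:\mathbb{R}^n\to\mathbb{R}^m$ is defined by $r_1(x)=(a_1^Tx-b_1)/\|a_1\|$ and $r_j(x)=(a_j^T(P_{j-1}\circ\cdots\circ P_1)(x)-b_j)/\|a_j\|$ for $j=2,\ldots,m$. $\operatorname{aff}(\cdot)$ denotes the affine hull. *)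

From mathcomp Require Import all_boot all_order all_algebra.
From mathcomp Require Import reals.
Set Implicit Arguments. Unset Strict Implicit. Unset Printing Implicit Defensive.
Import Order.TTheory GRing.Theory Num.Theory.
Local Open Scope ring_scope.

Section Kaczmarz.
Variables (R : realType) (m n : nat) (A : 'M[R]_(m, n)) (b : 'cV[R]_m).

Definition dotv (k : nat) (u v : 'cV[R]_k) : R := (u^T *m v) 0 0.
Definition sqnorm (k : nat) (u : 'cV[R]_k) : R := dotv u u.
Definition enorm (k : nat) (u : 'cV[R]_k) : R := Num.sqrt (sqnorm u).

Definition arow (j : 'I_m) : 'cV[R]_n := (row j A)^T.

Definition proj_j (j : 'I_m) (x : 'cV[R]_n) : 'cV[R]_n :=
  (1%:M - (sqnorm (arow j))^-1 *: (arow j *m (arow j)^T)) *m x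
  + (b j 0 / sqnorm (arow j)) *: arow j.

Definition partial_cycle (k : nat) (x : 'cV[R]_n) : 'cV[R]_n :=
  foldl (fun y j => proj_j j y) x (take k (enum 'I_m)).

Definition Pcycle (x : 'cV[R]_n) : 'cV[R]_n :=
  foldl (fun y j => proj_j j y) x (enum 'I_m).

(* residual r(x) in R^m:
   r_j(x) = (a_j^T (P_{j-1} o ... o P_1)(x) - b_j) / ||a_j|| (0-indexed j) *)
Definition residual (x : 'cV[R]_n) : 'cV[R]_m :=
  \col_(j < m) ((dotv (arow j) (partial_cycle j x) - b j 0) / enorm (arow j)).

(* one step of the Kaczmarz method with line-search; once delta = 0 the
   iteration has terminated and the iterate is kept fixed *)
Definition kls_step (x : 'cV[R]_n) : 'cV[R]_n :=
  let d := Pcycle x - x in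
  let delta := sqnorm d in
  if delta == 0 then x
  else let rho := sqnorm (residual x) in
       let s := 2^-1 + rho / (2 * delta) in
       x + s *: d.

Definition kls_seq (x0 : 'cV[R]_n) (k : nat) : 'cV[R]_n := iter k kls_step x0.

End Kaczmarz.

Definition aff2 (R : realType) (k : nat) (p q : 'cV[R]_k) (xi : 'cV[R]_k) : Prop :=
  exists t : R, xi = (1 - t) *: p + t *: q.

Definition is_argmin (R : realType) (T : Type) (S : T -> Prop) (f : T -> R) (z : T)
  : Prop :=
  S z /\ forall xi, S xi -> xi <> z -> f z < f xi.

(* Every projection P_j is orthogonal onto a hyperplane containing the solution
   x*, so by Pythagoras it decreases ||. - x*||^2 by exactly the square of the
   j-th residual; summing over a cycle gives
   ||x - x*||^2 - ||P x - x*||^2 = ||r(x)||^2.  This identity fixes the inner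
   product of x - x* with d = P x - x without knowing x*, so the distance to x*
   along the line x + t d is a known parabola in t, minimised at the step size
   s = 1/2 + ||r(x)||^2 / (2 ||d||^2).  If d = 0 then r(x) = 0, so every P_j
   fixes x and x solves every equation. *)
From Stdlib Require Import Classical.
From mathcomp Require Import all_boot all_order all_algebra.
From mathcomp Require Import reals.
From mathcomp Require Import ring.
Import Order.TTheory GRing.Theory Num.Theory.
Local Open Scope ring_scope.
Set Implicit Arguments. Unset Strict Implicit.

Section EuclideanNorm.
Variables (R : realType) (k : nat).
Implicit Types u v w : 'cV[R]_k.

Lemma dotvE u v : dotv u v = \sum_i u i 0 * v i 0.
Proof. by rewrite /dotv mxE; apply: eq_bigr => i _; rewrite mxE. Qed.

Lemma dotvC u v : dotv u v = dotv v u.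
Proof. by rewrite !dotvE; apply: eq_bigr => i _; rewrite mulrC. Qed.

Lemma dotvBl u v w : dotv (u - v) w = dotv u w - dotv v w.
Proof. by rewrite !dotvE -sumrB; apply: eq_bigr => i _; rewrite !mxE mulrBl. Qed.

Lemma sqnormE u : sqnorm u = \sum_i (u i 0) ^+ 2.
Proof. by rewrite /sqnorm dotvE; apply: eq_bigr => i _; rewrite expr2. Qed.

Lemma sqnormDZ u v (c : R) :
  sqnorm (u + c *: v) = sqnorm u + 2 * c * dotv u v + c ^+ 2 * sqnorm v.
Proof.
rewrite /sqnorm !dotvE !mulr_sumr -!big_split /=.
by apply: eq_bigr => i _; rewrite !mxE; ring.
Qed.

Lemma sqnorm_ge0 u : 0 <= sqnorm u.
Proof. by rewrite sqnormE; apply: sumr_ge0 => i _; rewrite sqr_ge0. Qed.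

Lemma sqnorm_eq0 u : (sqnorm u == 0) = (u == 0).
Proof.
apply/idP/eqP => [|->]; last by rewrite sqnormE big1 // => i _; rewrite mxE expr0n.
rewrite sqnormE psumr_eq0 => [/allP u0|i _]; last exact: sqr_ge0.
apply/matrixP => i j; rewrite ord1 mxE.
by apply/eqP; rewrite -sqrf_eq0; apply: u0; apply: mem_index_enum.
Qed.

Lemma sqnorm_gt0 u : (0 < sqnorm u) = (u != 0).
Proof. by rewrite lt_def sqnorm_eq0 sqnorm_ge0 andbT. Qed.

End EuclideanNorm.

Section LineSearch.
Variables (R : realType) (k : nat) (x p xs : 'cV[R]_k) (rho : R).
Hypothesis dist_drop : sqnorm (x - xs) - sqnorm (p - xs) = rho.
Hypothesis p_neq_x : sqnorm (p - x) != 0.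

Let d := p - x.
Let delta := sqnorm d.
Let s := 2^-1 + rho / (2 * delta).

Let delta_gt0 : 0 < delta.
Proof. by rewrite lt_def p_neq_x sqnorm_ge0. Qed.

Lemma aff2_line t : (1 - t) *: x + t *: p = x + t *: (p - x).
Proof. by rewrite scalerBr scalerBl scale1r addrAC addrA. Qed.

Lemma sqnorm_line_vertex t :
  sqnorm (x + t *: d - xs) = sqnorm (x + s *: d - xs) + delta * (t - s) ^+ 2.
Proof.
have shift c : x + c *: d - xs = (x - xs) + c *: d by rewrite addrAC.
have p_on_line : p - xs = (x - xs) + 1 *: d by rewrite scale1r /d [RHS]addrC subrKA.
(* at t = 1 the parabola passes through p, which pins down <x - xs, d> *)
have dot_xd : 2 * dotv (x - xs) d = - rho - delta.
  by move: dist_drop; rewrite p_on_line sqnormDZ -/delta => <-; ring.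
rewrite !shift !sqnormDZ -/delta !mulrA [2 * t]mulrC [2 * s]mulrC -!mulrA dot_xd.
by rewrite /s; field; rewrite gt_eqF.
Qed.

Lemma line_search_argmin :
  is_argmin (aff2 x p) (fun xi => sqnorm (xi - xs)) (x + s *: d).
Proof.
split; first by exists s; rewrite aff2_line.
move=> _ [t ->]; rewrite aff2_line => neq_s.
rewrite [X in _ < X]sqnorm_line_vertex ltrDl mulr_gt0 // lt_def sqr_ge0 andbT.
by rewrite sqrf_eq0 subr_eq0; apply/eqP => ts; apply: neq_s; rewrite ts.
Qed.

Lemma line_search_decrease :
  sqnorm (x - xs) - sqnorm (x + s *: d - xs) = (rho + delta) ^+ 2 / (4 * delta).
Proof.
have -> : x - xs = x + 0 *: d - xs by rewrite scale0r addr0.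
by rewrite sqnorm_line_vertex addrC addKr /s; field; rewrite gt_eqF.
Qed.

Lemma line_search_le_end : sqnorm (x + s *: d - xs) <= sqnorm (p - xs).
Proof.
have -> : p - xs = x + 1 *: d - xs by rewrite scale1r /d subrKC.
by rewrite [X in _ <= X]sqnorm_line_vertex lerDl mulr_ge0 ?sqr_ge0 ?ltW.
Qed.

End LineSearch.

Section KaczmarzCycle.
Variables (R : realType) (m n : nat) (A : 'M[R]_(m, n)) (b : 'cV[R]_m).
Hypothesis rows_neq0 : forall j, row j A != 0.
Implicit Types x y xs : 'cV[R]_n.

Lemma mulmx_arow x j : (A *m x) j 0 = dotv (arow A j) x.
Proof. by rewrite dotvE mxE; apply: eq_bigr => i _; rewrite !mxE. Qed.

Lemma sqnorm_arow_gt0 j : 0 < sqnorm (arow A j).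
Proof. by rewrite sqnorm_gt0 -(inj_eq (@trmx_inj _ _ _)) trmx0 trmxK rows_neq0. Qed.

Lemma proj_jE j y : proj_j A b j y =
  y - ((dotv (arow A j) y - b j 0) / sqnorm (arow A j)) *: arow A j.
Proof.
rewrite /proj_j mulmxBl mul1mx -scalemxAl -mulmxA.
by apply/matrixP => i l; rewrite ord1 !mxE big_ord1 !mxE /dotv mxE; ring.
Qed.

Lemma proj_j_pythagoras j y xs : A *m xs = b ->
  sqnorm (y - xs) - sqnorm (proj_j A b j y - xs) =
  (dotv (arow A j) y - b j 0) ^+ 2 / sqnorm (arow A j).
Proof.
move=> sol; have a_gt0 := sqnorm_arow_gt0 j.
have a_xs : dotv (arow A j) xs = b j 0 by rewrite -mulmx_arow sol.
rewrite proj_jE addrAC -scaleNr sqnormDZ dotvBl ![dotv _ (arow A j)]dotvC a_xs.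
by field; rewrite gt_eqF.
Qed.

Lemma residual_sqr x j : residual A b x j 0 ^+ 2 =
  (dotv (arow A j) (partial_cycle A b j x) - b j 0) ^+ 2 / sqnorm (arow A j).
Proof. by rewrite mxE expr_div_n /enorm sqr_sqrtr ?sqnorm_ge0. Qed.

Lemma partial_cycle0 x : partial_cycle A b 0 x = x.
Proof. by rewrite /partial_cycle take0. Qed.

Lemma partial_cycleS i x (lt_im : (i < m)%N) :
  partial_cycle A b i.+1 x = proj_j A b (Ordinal lt_im) (partial_cycle A b i x).
Proof.
rewrite /partial_cycle (take_nth (Ordinal lt_im)) ?size_enum_ord // foldl_rcons.
by rewrite (nth_ord_enum (Ordinal lt_im) (Ordinal lt_im)).
Qed.

Lemma partial_cycle_full x : partial_cycle A b m x = Pcycle A b x.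
Proof. by rewrite /partial_cycle take_oversize // size_enum_ord. Qed.

Lemma partial_cycle_dist x xs i : A *m xs = b -> (i <= m)%N ->
  sqnorm (x - xs) - sqnorm (partial_cycle A b i x - xs) =
  \sum_(j < m | (j < i)%N) residual A b x j 0 ^+ 2.
Proof.
move=> sol; elim: i => [_|i IH lt_im]; first by rewrite partial_cycle0 subrr big_pred0.
rewrite (bigD1 (Ordinal lt_im)) //= (eq_bigl (fun j : 'I_m => (j < i)%N)); last first.
  by move=> j; rewrite ltnS leq_eqVlt -(inj_eq val_inj) /=; case: ltngtP.
rewrite -IH; last exact: ltnW.
rewrite residual_sqr -(proj_j_pythagoras _ _ sol) -partial_cycleS.
by rewrite addrC addrA subrK.
Qed.

Lemma Pcycle_dist x xs : A *m xs = b ->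
  sqnorm (x - xs) - sqnorm (Pcycle A b x - xs) = sqnorm (residual A b x).
Proof.
move=> sol; rewrite -partial_cycle_full partial_cycle_dist // sqnormE.
by apply: eq_bigl => j; rewrite ltn_ord.
Qed.

Lemma Pcycle_fixed_solves x : (exists xs, A *m xs = b) ->
  sqnorm (Pcycle A b x - x) = 0 -> A *m x = b.
Proof.
move=> [xs sol] /eqP; rewrite sqnorm_eq0 subr_eq0 => /eqP Px.
have res0 j : dotv (arow A j) (partial_cycle A b j x) - b j 0 = 0.
  have /eqP := Pcycle_dist x sol; rewrite Px subrr eq_sym sqnorm_eq0 => /eqP r0.
  have /eqP := residual_sqr x j; rewrite r0 mxE expr0n /= eq_sym mulf_eq0.
  by rewrite invr_eq0 (gt_eqF (sqnorm_arow_gt0 j)) orbF sqrf_eq0 => /eqP.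
have fixed i : (i <= m)%N -> partial_cycle A b i x = x.
  elim: i => [|i IH lt_im]; first by rewrite partial_cycle0.
  rewrite partial_cycleS proj_jE; have /= -> := res0 (Ordinal lt_im).
  by rewrite mul0r scale0r subr0 IH // ltnW.
apply/matrixP => j l; rewrite ord1 mulmx_arow -(fixed j (ltnW (ltn_ord j))).
by apply/eqP; rewrite -subr_eq0 res0.
Qed.

Lemma kls_step_line_search x xs : A *m xs = b ->
  sqnorm (Pcycle A b x - x) != 0 ->
  is_argmin (aff2 x (Pcycle A b x)) (fun xi => sqnorm (xi - xs)) (kls_step A b x) /\
  sqnorm (x - xs) - sqnorm (kls_step A b x - xs) =
    (sqnorm (residual A b x) + sqnorm (Pcycle A b x - x)) ^+ 2
    / (4 * sqnorm (Pcycle A b x - x)) /\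
  sqnorm (kls_step A b x - xs) <= sqnorm (Pcycle A b x - xs).
Proof.
move=> sol d_neq0; rewrite /kls_step (negbTE d_neq0).
have drop := Pcycle_dist x sol.
split; [exact: line_search_argmin | split].
- exact: line_search_decrease.
- exact: line_search_le_end.
Qed.

End KaczmarzCycle.

Theorem corollary5 (R : realType) (m n : nat) (A : 'M[R]_(m, n)) (b : 'cV[R]_m)
    (x0 : 'cV[R]_n) :
  (forall j : 'I_m, row j A != 0) ->
  (exists x : 'cV[R]_n, A *m x = b) ->
  (exists k : nat,
      (forall i : nat, (i < k)%N ->
         sqnorm (Pcycle A b (kls_seq A b x0 i) - kls_seq A b x0 i) != 0) /\
      sqnorm (Pcycle A b (kls_seq A b x0 k) - kls_seq A b x0 k) = 0 /\
      A *m kls_seq A b x0 k = b)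
  \/
  ((forall k : nat,
      sqnorm (Pcycle A b (kls_seq A b x0 k) - kls_seq A b x0 k) != 0) /\
   forall (k : nat) (xs : 'cV[R]_n), A *m xs = b ->
     is_argmin (aff2 (kls_seq A b x0 k) (Pcycle A b (kls_seq A b x0 k)))
               (fun xi => sqnorm (xi - xs)) (kls_seq A b x0 k.+1) /\
     sqnorm (kls_seq A b x0 k - xs) - sqnorm (kls_seq A b x0 k.+1 - xs) =
       (sqnorm (residual A b (kls_seq A b x0 k))
        + sqnorm (Pcycle A b (kls_seq A b x0 k) - kls_seq A b x0 k)) ^+ 2
       / (4 * sqnorm (Pcycle A b (kls_seq A b x0 k) - kls_seq A b x0 k)) /\
     sqnorm (kls_seq A b x0 k.+1 - xs) <= sqnorm (Pcycle A b (kls_seq A b x0 k) - xs)).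
Proof.
move=> rows_neq0 solvable.
pose stops i := sqnorm (Pcycle A b (kls_seq A b x0 i) - kls_seq A b x0 i) == 0.
have [[i stop_i] | never] := classic (exists i, stops i).
  left; have [k /eqP stop_k min_k] := ex_minnP (ex_intro _ i stop_i).
  exists k; split; last by split; last exact: Pcycle_fixed_solves.
  by move=> j lt_jk; apply/negP => /min_k; rewrite leqNgt lt_jk.
have runs k : ~~ stops k by apply/negP => stop_k; apply: never; exists k.
right; split=> // k xs sol.
by rewrite /kls_seq iterS; apply: kls_step_line_search; last exact: runs.
Qed.
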